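(* Let $p_1,p_2,p_3,p_4>0$ with $\Delta:=p_1p_4-p_2p_3\neq0$, $S=p_1+p_2+p_3+p_4$, and let $u_1,u_2,v_1,v_2$ be given by \[ u_1=\frac{(p_1+p_2)(p_1+p_3)}{p_1S},\quad u_2=\frac{(p_1+p_2)(p_2+p_4)}{p_2S},\quad v_1=\frac{(p_1+p_3)(p_3+p_4)}{p_3S},\quad v_2=\frac{(p_2+p_4)(p_3+p_4)}{p_4S}. \] Let $N$ be a nonnegative integer and let $P_{m_1,m_2}(x_1,x_2)$ be formed with these $u$'s and $v$'s. Then for all nonnegative integers $x_1,x_2$ with $x_1+x_2\le N$ and $m_1,m_2$ with $m_1+m_2\le N$ (terms whose coefficient $N-m_1-m_2$, $m_1$, or $m_2$ vanishes being omitted), \begin{align*} &(N-m_1-m_2)\Big\{\frac{p_1p_3(p_2+p_4)S}{(p_1+p_3)\Delta}\big(P_{m_1+1,m_2}-P_{m_1,m_2}\big)-\frac{p_2p_4(p_1+p_3)S}{(p_2+p_4)\Delta}\big(P_{m_1,m_2+1}-P_{m_1,m_2}\big)\Big\}\\ &\quad+m_1\frac{\Delta}{p_1+p_3}\big(P_{m_1-1,m_2}-P_{m_1,m_2}\big)-m_2\frac{\Delta}{p_2+p_4}\big(P_{m_1,m_2-1}-P_{m_1,m_2}\big)\\ &=\big((p_1+p_2)x_1-(p_3+p_4)x_2\big)P_{m_1,m_2}(x_1,x_2), \end{align*} where every $P$ is evaluated at $(x_1,x_2)$.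
   Context: Notation: $(a)_k=a(a+1)\cdots(a+k-1)$, $(a)_0=1$, is the Pochhammer symbol. For a nonnegative integer $N$, nonnegative integers $m_1,m_2,x_1,x_2$ with $x_1+x_2\le N$, and parameters $u_1,v_1,u_2,v_2$, define \[ P_{m_1,m_2}(x_1,x_2)=\sum_{\substack{i,j,k,l\ge 0\\ i+j+k+l\le N}}\frac{(-m_1)_{i+j}(-m_2)_{k+l}(-x_1)_{i+k}(-x_2)_{j+l}}{i!\,j!\,k!\,l!\,(-N)_{i+j+k+l}}\,u_1^i v_1^j u_2^k v_2^l . \] *)

From HB Require Import structures.
From mathcomp Require Import all_boot all_order all_algebra.
Set Implicit Arguments. Unset Strict Implicit. Unset Printing Implicit Defensive.
Import Order.TTheory GRing.Theory Num.Theory.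
Local Open Scope ring_scope.

Definition poch {R : pzRingType} (a : R) (k : nat) : R :=
  \prod_(t < k) (a + t%:R).

Definition Pkrawt {R : fieldType} (N : nat) (u1 v1 u2 v2 : R)
    (m1 m2 x1 x2 : nat) : R :=
  \sum_(i < N.+1) \sum_(j < N.+1) \sum_(k < N.+1) \sum_(l < N.+1)
    if (i + j + k + l <= N)%N then
      poch (- m1%:R) (i + j) * poch (- m2%:R) (k + l)
      * poch (- x1%:R) (i + k) * poch (- x2%:R) (j + l)
      / ((i`! * j`! * k`! * l`!)%:R * poch (- N%:R) (i + j + k + l))
      * u1 ^+ i * v1 ^+ j * u2 ^+ k * v2 ^+ l
    else 0.

From HB Require Import structures.
From mathcomp Require Import all_boot all_order all_algebra.
From mathcomp Require Import ring zify.
Set Implicit Arguments. Unset Strict Implicit. Unset Printing Implicit Defensive.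
Import Order.TTheory GRing.Theory Num.Theory.
Local Open Scope ring_scope.

(** The polynomial is a four-fold sum of [c i j k l * T (i + j) (k + l) (i + k) (j + l)]
    with exponential weights [c i j k l = u1^i v1^j u2^k v2^l / (i! j! k! l!)] and [T] a
    ratio of Pochhammer symbols.  Multiplication by [x1] or [x2] and the differences in
    [m1] or [m2] all become sums of the same shape: a difference in [m1] produces, by the
    three-term contiguity of Pochhammer ratios, terms carrying a factor [i + j], and the
    index shift [i * c i j k l = u1 * c (i - 1) j k l] (likewise for [j], [k], [l]) moves
    that factor onto a raised [i + k] or [j + l].  Both sides of the recurrence are then
    sums of [T], [T] with [i + k] raised and [T] with [j + l] raised, and the particular
    values of [u1, u2, v1, v2] make the coefficients agree summand by summand.  The
    relations in [m2] are those in [m1] read through the symmetry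
    [(i, j, m1, u1, v1) <-> (k, l, m2, u2, v2)]. *)

Section Pochhammer.
Variable R : comNzRingType.
Implicit Types (a : R) (m s x : nat).

Lemma poch0 a : poch a 0 = 1.
Proof. exact: big_ord0. Qed.

Lemma pochS a s : poch a s.+1 = poch a s * (a + s%:R).
Proof. by rewrite /poch big_ord_recr. Qed.

Lemma pochSl a s : poch a s.+1 = a * poch (a + 1) s.
Proof.
rewrite /poch big_ord_recl addr0; congr (_ * _); apply: eq_bigr => t _.
by rewrite lift0 /= -addn1 natrD; ring.
Qed.

Lemma poch_subr1 a s : poch (a - 1) s - poch a s = - s%:R * poch a s.-1.
Proof.
case: s => [|s]; first by rewrite !poch0 subrr; ring.
by rewrite pochSl pochS subrK /=; ring.
Qed.

Lemma poch_addr1 a s : a * (poch (a + 1) s - poch a s) = s%:R * poch a s.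
Proof. by rewrite mulrBr -pochSl pochS; ring. Qed.

Lemma poch_oppn_eq0 x s : (x < s)%N -> poch (- x%:R) s = 0 :> R.
Proof. by move=> lt_xs; rewrite /poch (bigD1 (Ordinal lt_xs)) //= addNr mul0r. Qed.

Lemma poch_oppn_predn m s :
  m%:R * (poch (- m.-1%:R) s - poch (- m%:R) s) = - s%:R * poch (- m%:R) s :> R.
Proof.
case: m => [|m] /=; first by case: s => [|s]; [rewrite !poch0 | rewrite poch_oppn_eq0 //]; ring.
have -> : - m%:R = - m.+1%:R + 1 :> R by rewrite -addn1 natrD; ring.
by rewrite -[LHS]opprK -mulNr poch_addr1 mulNr.
Qed.

End Pochhammer.

Lemma poch_oppn_neq0 (R : numDomainType) (N n : nat) :
  (n <= N)%N -> poch (- N%:R) n != 0 :> R.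
Proof.
move=> le_nN; apply/prodf_neq0 => t _; rewrite addrC subr_eq0 eqr_nat.
by apply: contraTneq (ltn_ord t) => ->; rewrite -leqNgt.
Qed.

Lemma poch_contig (F : fieldType) (a b c : F) (s t : nat) :
  poch c (s + t).+1 != 0 ->
  (a + b - c) * (poch a s * poch b t / poch c (s + t).+1)
  = poch a s.+1 * poch b t / poch c (s + t).+1
    + poch a s * poch b t.+1 / poch c (s + t).+1
    - poch a s * poch b t / poch c (s + t).
Proof.
rewrite !pochS mulf_eq0 negb_or => /andP[nz_c nz_cst].
by rewrite natrD; field; rewrite nz_c -natrD nz_cst.
Qed.

Section KrawtchoukSums.
Variables (R : numFieldType) (u1 v1 u2 v2 : R) (N x1 x2 : nat).
Hypothesis le_x_N : (x1 + x2 <= N)%N.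

Definition expw (u : R) (i : nat) : R := u ^+ i / i`!%:R.

Lemma expwS u i : i.+1%:R * expw u i.+1 = u * expw u i.
Proof.
rewrite /expw factS natrM exprS.
by field; rewrite addrC natr1 !pnatr_eq0 -lt0n fact_gt0.
Qed.

Definition wsum (u : R) (g : nat -> R) : R := \sum_(i < N.+1) expw u i * g i.

Lemma eq_wsum u g h : (forall i, g i = h i) -> wsum u g = wsum u h.
Proof. by move=> e_gh; apply: eq_bigr => i _; rewrite e_gh. Qed.

Lemma wsumD u g h : wsum u (fun i => g i + h i) = wsum u g + wsum u h.
Proof. by rewrite -big_split; apply: eq_bigr => i _; rewrite mulrDr. Qed.

Lemma wsumZ u c g : wsum u (fun i => c * g i) = c * wsum u g.
Proof. by rewrite mulr_sumr; apply: eq_bigr => i _; rewrite mulrCA. Qed.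

Lemma wsum_mul_index u g :
  g N.+1 = 0 -> wsum u (fun i => i%:R * g i) = wsum u (fun i => u * g i.+1).
Proof.
move=> gN0; rewrite /wsum big_ord_recl big_ord_recr /= gN0 !(mul0r, mulr0) add0r addr0.
by apply: eq_bigr => i _; rewrite mulrA (mulrC (expw _ _)) expwS /=; ring.
Qed.

Lemma wsumC u v (g : nat -> nat -> R) :
  wsum u (fun i => wsum v (g i)) = wsum v (fun j => wsum u (fun i => g i j)).
Proof.
rewrite /wsum; under eq_bigr do rewrite mulr_sumr.
rewrite exchange_big; apply: eq_bigr => j _; rewrite mulr_sumr.
by apply: eq_bigr => i _; rewrite mulrCA.
Qed.

Definition ksum (f : nat -> nat -> nat -> nat -> R) : R :=
  wsum u1 (fun i => wsum v1 (fun j => wsum u2 (fun k => wsum v2 (f i j k)))).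

Lemma eq_ksum f g :
  (forall i j k l, f i j k l = g i j k l) -> ksum f = ksum g.
Proof.
move=> e_fg; do 3 apply: eq_wsum => ?; exact: eq_wsum.
Qed.

Lemma ksumD f g :
  ksum (fun i j k l => f i j k l + g i j k l) = ksum f + ksum g.
Proof.
rewrite /ksum -wsumD; apply: eq_wsum => i; rewrite -wsumD.
apply: eq_wsum => j; rewrite -wsumD; apply: eq_wsum => k; exact: wsumD.
Qed.

Lemma ksumZ c f : ksum (fun i j k l => c * f i j k l) = c * ksum f.
Proof.
rewrite /ksum -wsumZ; apply: eq_wsum => i; rewrite -wsumZ.
apply: eq_wsum => j; rewrite -wsumZ; apply: eq_wsum => k; exact: wsumZ.
Qed.

Lemma ksumB f g :
  ksum (fun i j k l => f i j k l - g i j k l) = ksum f - ksum g.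
Proof.
by rewrite ksumD -mulN1r -ksumZ; congr (_ + _); apply: eq_ksum => *; rewrite mulN1r.
Qed.

Lemma wsum_eq0 u g : (forall i, g i = 0) -> wsum u g = 0.
Proof. by move=> g0; apply: big1 => i _; rewrite g0 mulr0. Qed.

Lemma ksum_shift_i f : (forall j k l, f N.+1 j k l = 0) ->
  ksum (fun i j k l => i%:R * f i j k l) = u1 * ksum (fun i j k l => f i.+1 j k l).
Proof.
move=> f0; rewrite /ksum.
under eq_wsum => i do under eq_wsum => j do under eq_wsum => k do rewrite wsumZ.
under eq_wsum => i do under eq_wsum => j do rewrite wsumZ.
under eq_wsum => i do rewrite wsumZ.
rewrite wsum_mul_index ?wsumZ //.
by do 3 apply: wsum_eq0 => ?.
Qed.

Lemma ksum_shift_j f : (forall i k l, f i N.+1 k l = 0) ->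
  ksum (fun i j k l => j%:R * f i j k l) = v1 * ksum (fun i j k l => f i j.+1 k l).
Proof.
move=> f0; rewrite /ksum -wsumZ; apply: eq_wsum => i.
under eq_wsum => j do under eq_wsum => k do rewrite wsumZ.
under eq_wsum => j do rewrite wsumZ.
rewrite wsum_mul_index ?wsumZ //.
by do 2 apply: wsum_eq0 => ?.
Qed.

Lemma ksum_shift_k f : (forall i j l, f i j N.+1 l = 0) ->
  ksum (fun i j k l => k%:R * f i j k l) = u2 * ksum (fun i j k l => f i j k.+1 l).
Proof.
move=> f0; rewrite /ksum -wsumZ; apply: eq_wsum => i; rewrite -wsumZ; apply: eq_wsum => j.
under eq_wsum => k do rewrite wsumZ.
by rewrite wsum_mul_index ?wsumZ //; apply: wsum_eq0.
Qed.

Lemma ksum_shift_l f : (forall i j k, f i j k N.+1 = 0) ->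
  ksum (fun i j k l => l%:R * f i j k l) = v2 * ksum (fun i j k l => f i j k l.+1).
Proof.
move=> f0; rewrite /ksum -wsumZ; apply: eq_wsum => i; rewrite -wsumZ; apply: eq_wsum => j.
rewrite -wsumZ; apply: eq_wsum => k.
by rewrite wsum_mul_index ?wsumZ.
Qed.

(* For [N < s + t] the divisor vanishes and [x / 0 = 0] makes the term [0]: this
   encodes the truncation [i + j + k + l <= N] of [Pkrawt]. *)
Definition kterm (m1 m2 s t a b : nat) : R :=
  poch (- m1%:R) s * poch (- m2%:R) t * poch (- x1%:R) a * poch (- x2%:R) b
  / poch (- N%:R) (s + t).

Definition Kpoly (m1 m2 : nat) : R :=
  ksum (fun i j k l => kterm m1 m2 (i + j) (k + l) (i + k) (j + l)).

Lemma kterm_eq0 m1 m2 s t a b : (N < a + b)%N -> kterm m1 m2 s t a b = 0.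
Proof.
move=> lt_N_ab; rewrite /kterm.
have [/(@poch_oppn_eq0 R) -> | le_a_x1] := ltnP x1 a; first by rewrite !(mulr0, mul0r).
by rewrite (@poch_oppn_eq0 R x2 b) ?(mulr0, mul0r) //; lia.
Qed.

Lemma kterm_swap m1 m2 s t a b : kterm m1 m2 s t a b = kterm m2 m1 t s a b.
Proof. by rewrite /kterm addnC (mulrC (poch _ s)). Qed.

Lemma Pkrawt_Kpoly m1 m2 : Pkrawt N u1 v1 u2 v2 m1 m2 x1 x2 = Kpoly m1 m2.
Proof.
rewrite /Pkrawt /Kpoly /ksum /wsum; apply: eq_bigr => i _; rewrite mulr_sumr.
apply: eq_bigr => j _; rewrite mulrA mulr_sumr; apply: eq_bigr => k _.
rewrite mulrA mulr_sumr; apply: eq_bigr => l _; rewrite /kterm /expw addnA.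
case: ifP => [_ | /negbT]; first by rewrite !natrM !invfM; ring.
by rewrite -ltnNge => /(@poch_oppn_eq0 R) ->; rewrite invr0 !mulr0.
Qed.

Lemma kterm_raise_m1 m1 m2 s t a b : (m1 + m2 <= N)%N -> (a + b = s + t)%N ->
  (N - m1 - m2)%:R * (kterm m1.+1 m2 s t a b - kterm m1 m2 s t a b)
  = s%:R * (kterm m1 m2 s.-1 t a b - kterm m1 m2 s t a b - kterm m1 m2 s.-1 t.+1 a b).
Proof.
move=> le_m_N; case: s => [|s] e_ab; first by rewrite /kterm !poch0 subrr !mul0r mulr0.
have [le_st_N | lt_N_st] := leqP (s + t).+1 N; last first.
  by rewrite !kterm_eq0 ?subrr ?mulr0 // e_ab.
have poch_m1S : poch (- m1.+1%:R) s.+1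
    = poch (- m1%:R) s.+1 - s.+1%:R * poch (- m1%:R : R) s.
  by rewrite -addn1 natrD opprD -mulNr -poch_subr1 /=; ring.
have contig := @poch_contig _ (- m1%:R) (- m2%:R) (- N%:R) s t (poch_oppn_neq0 R le_st_N).
rewrite /kterm poch_m1S addSn addnS natrB ?natrB /=; [ | lia | lia].
transitivity (- s.+1%:R * poch (- x1%:R) a * poch (- x2%:R) b
  * ((- m1%:R + - m2%:R - - N%:R)
     * (poch (- m1%:R) s * poch (- m2%:R) t / poch (- N%:R) (s + t).+1)) : R).
  by ring.
by rewrite contig; ring.
Qed.

Lemma kterm_lower_m1 m1 m2 s t a b :
  m1%:R * (kterm m1.-1 m2 s t a b - kterm m1 m2 s t a b) = - s%:R * kterm m1 m2 s t a b.
Proof. by rewrite /kterm -!mulrBl !mulrA poch_oppn_predn ?mulrA. Qed.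

Lemma kterm_mul_x1 m1 m2 s t a b :
  x1%:R * kterm m1 m2 s t a b = a%:R * kterm m1 m2 s t a b - kterm m1 m2 s t a.+1 b.
Proof. by rewrite /kterm pochS; ring. Qed.

Lemma kterm_mul_x2 m1 m2 s t a b :
  x2%:R * kterm m1 m2 s t a b = b%:R * kterm m1 m2 s t a b - kterm m1 m2 s t a b.+1.
Proof. by rewrite /kterm pochS; ring. Qed.

Lemma ksum_lower_s_raise_x m1 m2 :
  ksum (fun i j k l => (i + j)%:R * kterm m1 m2 (i + j).-1 (k + l) (i + k) (j + l))
  = ksum (fun i j k l => u1 * kterm m1 m2 (i + j) (k + l) (i + k).+1 (j + l)
                         + v1 * kterm m1 m2 (i + j) (k + l) (i + k) (j + l).+1).
Proof.
transitivity (ksum (fun i j k l => i%:R * kterm m1 m2 (i + j).-1 (k + l) (i + k) (j + l))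
            + ksum (fun i j k l => j%:R * kterm m1 m2 (i + j).-1 (k + l) (i + k) (j + l))).
  by rewrite -ksumD; apply: eq_ksum => i j k l; rewrite natrD mulrDl.
rewrite ksum_shift_i ?ksum_shift_j; try by move=> *; apply: kterm_eq0; lia.
by rewrite -!ksumZ -ksumD; apply: eq_ksum => i j k l; rewrite !addSn !addnS.
Qed.

Lemma ksum_lower_s_raise_t m1 m2 : u2 != 0 -> v2 != 0 ->
  ksum (fun i j k l => (i + j)%:R * kterm m1 m2 (i + j).-1 (k + l).+1 (i + k) (j + l))
  = ksum (fun i j k l => (u1 / u2 * k%:R + v1 / v2 * l%:R)
                         * kterm m1 m2 (i + j) (k + l) (i + k) (j + l)).
Proof.
move=> nz_u2 nz_v2.
have shift_ik : ksum (fun i j k l => i%:R * kterm m1 m2 (i + j).-1 (k + l).+1 (i + k) (j + l))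
    = u1 / u2 * ksum (fun i j k l => k%:R * kterm m1 m2 (i + j) (k + l) (i + k) (j + l)).
  rewrite ksum_shift_i ?ksum_shift_k; try by move=> *; apply: kterm_eq0; lia.
  rewrite mulrA divfK //.
  by congr (_ * _); apply: eq_ksum => i j k l; rewrite !addSn !addnS.
have shift_jl : ksum (fun i j k l => j%:R * kterm m1 m2 (i + j).-1 (k + l).+1 (i + k) (j + l))
    = v1 / v2 * ksum (fun i j k l => l%:R * kterm m1 m2 (i + j) (k + l) (i + k) (j + l)).
  rewrite ksum_shift_j ?ksum_shift_l; try by move=> *; apply: kterm_eq0; lia.
  rewrite mulrA divfK //.
  by congr (_ * _); apply: eq_ksum => i j k l; rewrite !addSn !addnS.
transitivity (ksum (fun i j k l => i%:R * kterm m1 m2 (i + j).-1 (k + l).+1 (i + k) (j + l))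
            + ksum (fun i j k l => j%:R * kterm m1 m2 (i + j).-1 (k + l).+1 (i + k) (j + l))).
  by rewrite -ksumD; apply: eq_ksum => i j k l; rewrite natrD mulrDl.
by rewrite shift_ik shift_jl -!ksumZ -ksumD; apply: eq_ksum => *; ring.
Qed.

Lemma Kpoly_raise_m1 m1 m2 : u2 != 0 -> v2 != 0 -> (m1 + m2 <= N)%N ->
  (N - m1 - m2)%:R * (Kpoly m1.+1 m2 - Kpoly m1 m2)
  = ksum (fun i j k l => u1 * kterm m1 m2 (i + j) (k + l) (i + k).+1 (j + l)
       + v1 * kterm m1 m2 (i + j) (k + l) (i + k) (j + l).+1
       - ((i + j)%:R + u1 / u2 * k%:R + v1 / v2 * l%:R)
         * kterm m1 m2 (i + j) (k + l) (i + k) (j + l)).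
Proof.
move=> nz_u2 nz_v2 le_m_N.
transitivity
  (ksum (fun i j k l => (i + j)%:R * kterm m1 m2 (i + j).-1 (k + l) (i + k) (j + l))
   - ksum (fun i j k l => (i + j)%:R * kterm m1 m2 (i + j) (k + l) (i + k) (j + l))
   - ksum (fun i j k l => (i + j)%:R * kterm m1 m2 (i + j).-1 (k + l).+1 (i + k) (j + l))).
  rewrite /Kpoly -!ksumB -ksumZ; apply: eq_ksum => i j k l.
  by rewrite kterm_raise_m1 ?mulrBr //; exact: addnACA.
rewrite ksum_lower_s_raise_x ksum_lower_s_raise_t // -!ksumB.
by apply: eq_ksum => *; ring.
Qed.

Lemma Kpoly_lower_m1 m1 m2 :
  m1%:R * (Kpoly m1.-1 m2 - Kpoly m1 m2)
  = ksum (fun i j k l => - (i + j)%:R * kterm m1 m2 (i + j) (k + l) (i + k) (j + l)).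
Proof. by rewrite /Kpoly -ksumB -ksumZ; apply: eq_ksum => *; exact: kterm_lower_m1. Qed.

Lemma Kpoly_mul_x1 m1 m2 :
  x1%:R * Kpoly m1 m2
  = ksum (fun i j k l => (i + k)%:R * kterm m1 m2 (i + j) (k + l) (i + k) (j + l)
                         - kterm m1 m2 (i + j) (k + l) (i + k).+1 (j + l)).
Proof. by rewrite /Kpoly -ksumZ; apply: eq_ksum => *; exact: kterm_mul_x1. Qed.

Lemma Kpoly_mul_x2 m1 m2 :
  x2%:R * Kpoly m1 m2
  = ksum (fun i j k l => (j + l)%:R * kterm m1 m2 (i + j) (k + l) (i + k) (j + l)
                         - kterm m1 m2 (i + j) (k + l) (i + k) (j + l).+1).
Proof. by rewrite /Kpoly -ksumZ; apply: eq_ksum => *; exact: kterm_mul_x2. Qed.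

End KrawtchoukSums.

Section Symmetry.
Variables (R : numFieldType) (u1 v1 u2 v2 : R) (N x1 x2 : nat).

Lemma ksum_swap f :
  ksum u1 v1 u2 v2 N f = ksum u2 v2 u1 v1 N (fun k l i j => f i j k l).
Proof.
rewrite /ksum; under eq_wsum => i do rewrite wsumC.
rewrite wsumC; apply: eq_wsum => k.
by under eq_wsum => i do rewrite wsumC; rewrite wsumC.
Qed.

Lemma Kpoly_swap m1 m2 :
  Kpoly u1 v1 u2 v2 N x1 x2 m1 m2 = Kpoly u2 v2 u1 v1 N x1 x2 m2 m1.
Proof.
rewrite /Kpoly ksum_swap; apply: eq_ksum => k l i j.
by rewrite kterm_swap (addnC i k) (addnC j l).
Qed.

Hypothesis le_x_N : (x1 + x2 <= N)%N.
Local Notation ks := (ksum u1 v1 u2 v2 N).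
Local Notation K := (Kpoly u1 v1 u2 v2 N x1 x2).
Local Notation kt := (kterm R N x1 x2).

Lemma Kpoly_raise_m2 m1 m2 : u1 != 0 -> v1 != 0 -> (m1 + m2 <= N)%N ->
  (N - m1 - m2)%:R * (K m1 m2.+1 - K m1 m2)
  = ks (fun i j k l => u2 * kt m1 m2 (i + j) (k + l) (i + k).+1 (j + l)
       + v2 * kt m1 m2 (i + j) (k + l) (i + k) (j + l).+1
       - ((k + l)%:R + u2 / u1 * i%:R + v2 / v1 * j%:R)
         * kt m1 m2 (i + j) (k + l) (i + k) (j + l)).
Proof.
move=> nz_u1 nz_v1 le_m_N.
rewrite !(Kpoly_swap m1) subnAC (Kpoly_raise_m1 u2 v2 le_x_N) //; last by rewrite addnC.
rewrite [RHS]ksum_swap; apply: eq_ksum => k l i j.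
by rewrite ![kt m1 m2 _ _ _ _]kterm_swap (addnC i k) (addnC j l).
Qed.

Lemma Kpoly_lower_m2 m1 m2 :
  m2%:R * (K m1 m2.-1 - K m1 m2)
  = ks (fun i j k l => - (k + l)%:R * kt m1 m2 (i + j) (k + l) (i + k) (j + l)).
Proof.
rewrite !(Kpoly_swap m1) Kpoly_lower_m1 [RHS]ksum_swap.
apply: eq_ksum => k l i j.
by rewrite ![kt m1 m2 _ _ _ _]kterm_swap (addnC i k) (addnC j l).
Qed.

End Symmetry.

Section Recurrence.
Variables (R : numFieldType) (p1 p2 p3 p4 : R) (N x1 x2 : nat).
Hypothesis le_x_N : (x1 + x2 <= N)%N.
Hypotheses (nz_p1 : p1 != 0) (nz_p2 : p2 != 0) (nz_p3 : p3 != 0) (nz_p4 : p4 != 0).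
Hypotheses (nz_p12 : p1 + p2 != 0) (nz_p13 : p1 + p3 != 0).
Hypotheses (nz_p24 : p2 + p4 != 0) (nz_p34 : p3 + p4 != 0).
Hypotheses (nz_S : p1 + p2 + p3 + p4 != 0) (nz_D : p1 * p4 - p2 * p3 != 0).

Let S := p1 + p2 + p3 + p4.
Let D := p1 * p4 - p2 * p3.
Let u1 := (p1 + p2) * (p1 + p3) / (p1 * S).
Let u2 := (p1 + p2) * (p2 + p4) / (p2 * S).
Let v1 := (p1 + p3) * (p3 + p4) / (p3 * S).
Let v2 := (p2 + p4) * (p3 + p4) / (p4 * S).
Local Notation K := (Kpoly u1 v1 u2 v2 N x1 x2).

Lemma Kpoly_recurrence m1 m2 : (m1 + m2 <= N)%N ->
  (N - m1 - m2)%N%:R *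
      (p1 * p3 * (p2 + p4) * S / ((p1 + p3) * D) * (K m1.+1 m2 - K m1 m2)
       - p2 * p4 * (p1 + p3) * S / ((p2 + p4) * D) * (K m1 m2.+1 - K m1 m2))
    + m1%:R * (D / (p1 + p3)) * (K m1.-1 m2 - K m1 m2)
    - m2%:R * (D / (p2 + p4)) * (K m1 m2.-1 - K m1 m2)
  = ((p1 + p2) * x1%:R - (p3 + p4) * x2%:R) * K m1 m2.
Proof.
move=> le_m_N.
have nz_u : [/\ u1 != 0, u2 != 0, v1 != 0 & v2 != 0].
  by split; rewrite !(mulf_neq0, invr_neq0).
case: nz_u => nz_u1 nz_u2 nz_v1 nz_v2.
transitivity
  (p1 * p3 * (p2 + p4) * S / ((p1 + p3) * D) * ((N - m1 - m2)%:R * (K m1.+1 m2 - K m1 m2))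
  - p2 * p4 * (p1 + p3) * S / ((p2 + p4) * D) * ((N - m1 - m2)%:R * (K m1 m2.+1 - K m1 m2))
  + D / (p1 + p3) * (m1%:R * (K m1.-1 m2 - K m1 m2))
  - D / (p2 + p4) * (m2%:R * (K m1 m2.-1 - K m1 m2))); first by ring.
transitivity ((p1 + p2) * (x1%:R * K m1 m2) - (p3 + p4) * (x2%:R * K m1 m2)); last by ring.
rewrite (Kpoly_raise_m1 u1 v1 le_x_N) // (Kpoly_raise_m2 u2 v2 le_x_N) //.
rewrite Kpoly_lower_m1 Kpoly_lower_m2 Kpoly_mul_x1 Kpoly_mul_x2.
rewrite -!ksumZ -ksumB -ksumD -!ksumB; apply: eq_ksum => i j k l.
rewrite /u1 /u2 /v1 /v2 /S /D; field.
by rewrite !(nz_p1, nz_p2, nz_p3, nz_p4, nz_p12, nz_p13, nz_p24, nz_p34, nz_S, nz_D).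
Qed.

End Recurrence.

Theorem mainTheorem5 (R : realFieldType) (p1 p2 p3 p4 : R)
  (hp1 : 0 < p1) (hp2 : 0 < p2) (hp3 : 0 < p3) (hp4 : 0 < p4)
  (hD : p1 * p4 - p2 * p3 != 0)
  (N m1 m2 x1 x2 : nat) (hx : (x1 + x2 <= N)%N) (hm : (m1 + m2 <= N)%N) :
  let D := p1 * p4 - p2 * p3 in
  let S := p1 + p2 + p3 + p4 in
  let u1 := (p1 + p2) * (p1 + p3) / (p1 * S) in
  let u2 := (p1 + p2) * (p2 + p4) / (p2 * S) in
  let v1 := (p1 + p3) * (p3 + p4) / (p3 * S) in
  let v2 := (p2 + p4) * (p3 + p4) / (p4 * S) in
  let P a b := Pkrawt N u1 v1 u2 v2 a b x1 x2 in
  (N - m1 - m2)%N%:R *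
      (p1 * p3 * (p2 + p4) * S / ((p1 + p3) * D) * (P m1.+1 m2 - P m1 m2)
       - p2 * p4 * (p1 + p3) * S / ((p2 + p4) * D) * (P m1 m2.+1 - P m1 m2))
    + m1%:R * (D / (p1 + p3)) * (P m1.-1 m2 - P m1 m2)
    - m2%:R * (D / (p2 + p4)) * (P m1 m2.-1 - P m1 m2)
  = ((p1 + p2) * x1%:R - (p3 + p4) * x2%:R) * P m1 m2.
Proof.
move=> D S u1 u2 v1 v2 P; rewrite /P !Pkrawt_Kpoly.
by apply: Kpoly_recurrence => //; apply: lt0r_neq0; rewrite ?addr_gt0.
Qed.
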